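(* Consider the control system, with state $(J_1,J_3,K_2,Q_2,J_0,Q_1,K_1,Q_3,K_3,J_2)\in\mathbb{R}^{10}$ and scalar control $g(t)$, \[ \begin{aligned} \dot J_1&=2gJ_3,\quad \dot J_3=-2gJ_1+2gK_2,\quad \dot K_2=2gJ_3+2Q_2,\quad \dot Q_2=-2K_2,\\ \dot J_0&=-2gQ_1,\quad \dot Q_1=-2gJ_0-2K_1+2gQ_3,\quad \dot K_1=2Q_1+2gK_3,\\ \dot Q_3&=-2gQ_1-2K_3,\quad \dot K_3=-2gK_1+2Q_3-2gJ_2,\quad \dot J_2=-2gK_3, \end{aligned} \] with initial state $(J_1,J_3,K_2,Q_2)=(-1,0,0,0)$, $(J_0,Q_1,K_1,Q_3,K_3,J_2)=(1,0,0,0,0,0)$. Then for every $G_0>0$ the target state $(J_1,J_3,K_2,Q_2)=(1,0,0,0)$, $(J_0,Q_1,K_1,Q_3,K_3,J_2)=(1,0,0,0,0,0)$ belongs to the reachable set of this system with controls satisfying $-G_0\le g(t)\le G_0$; that is, there exist a control $g$ with $|g(t)|\le G_0$ and a time $T>0$ such that the solution starting from the initial state is at the target state at time $T$.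
   Context: This system describes the (time-normalized) expectation values of generators of $Sp(4)$ for a cavity optomechanical system in the red-detuned regime, where $g(t)$ is the photon–phonon coupling rate in units of the mechanical frequency; the target state corresponds to a complete swap of photon and phonon populations (cooling of the mechanical resonator). *)

From Stdlib Require Import Reals.
From Coquelicot Require Import Coquelicot.
Open Scope R_scope.

Record state := mkState {
  sJ1 : R; sJ3 : R; sK2 : R; sQ2 : R;
  sJ0 : R; sQ1 : R; sK1 : R; sQ3 : R; sK3 : R; sJ2 : R }.

Definition fJ1 (g : R) (x : state) : R := 2 * g * sJ3 x.
Definition fJ3 (g : R) (x : state) : R := - 2 * g * sJ1 x + 2 * g * sK2 x.
Definition fK2 (g : R) (x : state) : R := 2 * g * sJ3 x + 2 * sQ2 x.
Definition fQ2 (g : R) (x : state) : R := - 2 * sK2 x.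
Definition fJ0 (g : R) (x : state) : R := - 2 * g * sQ1 x.
Definition fQ1 (g : R) (x : state) : R :=
  - 2 * g * sJ0 x - 2 * sK1 x + 2 * g * sQ3 x.
Definition fK1 (g : R) (x : state) : R := 2 * sQ1 x + 2 * g * sK3 x.
Definition fQ3 (g : R) (x : state) : R := - 2 * g * sQ1 x - 2 * sK3 x.
Definition fK3 (g : R) (x : state) : R :=
  - 2 * g * sK1 x + 2 * sQ3 x - 2 * g * sJ2 x.
Definition fJ2 (g : R) (x : state) : R := - 2 * g * sK3 x.

Definition coord_ok (c : state -> R) (f : R -> state -> R)
  (g : R -> R) (x : R -> state) (T : R) : Prop :=
  forall t, 0 <= t <= T ->
    is_RInt (fun s => f (g s) (x s)) 0 t (c (x t) - c (x 0)).

Definition is_solution (g : R -> R) (x : R -> state) (T : R) : Prop :=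
  coord_ok sJ1 fJ1 g x T /\ coord_ok sJ3 fJ3 g x T /\
  coord_ok sK2 fK2 g x T /\ coord_ok sQ2 fQ2 g x T /\
  coord_ok sJ0 fJ0 g x T /\ coord_ok sQ1 fQ1 g x T /\
  coord_ok sK1 fK1 g x T /\ coord_ok sQ3 fQ3 g x T /\
  coord_ok sK3 fK3 g x T /\ coord_ok sJ2 fJ2 g x T.

Definition initial_state : state := mkState (-1) 0 0 0 1 0 0 0 0 0.
Definition target_state  : state := mkState 1 0 0 0 1 0 0 0 0 0.

(* Take the constant control g = m / (1 + m^2) with m an odd integer larger
   than 1 / G0, so that |g| < 1 / m < G0.  The system is then linear with
   constant coefficients and its solution is explicit: the block
   (J1, J3, K2, Q2) oscillates with angular frequencies w and m w, and the
   block (J0, ..., J2) with frequencies (m + 1) w and (m - 1) w, where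
   w = 2 / sqrt (1 + m^2).  At time T = PI / w the phases are PI, m PI and
   (m +- 1) PI; since m is odd the first block is reflected, turning
   J1 = -1 into J1 = 1, while the second block, whose phases are even
   multiples of PI, returns to its initial value. *)

From Stdlib Require Import Reals Lra Nsatz.
From Coquelicot Require Import Coquelicot.
Open Scope R_scope.

Lemma coord_ok_of_derive (c : state -> R) (f : R -> state -> R)
    (g : R -> R) (x : R -> state) (T : R) :
  (forall t, is_derive (fun s => c (x s)) t (f (g t) (x t))) ->
  (forall t, ex_derive (fun s => f (g s) (x s)) t) ->
  coord_ok c f g x T.
Proof.
intros hder hsmooth t _.
apply (is_RInt_derive (fun s => c (x s))); intros s _; [apply hder |].
exact (ex_derive_continuous (fun s => f (g s) (x s)) s (hsmooth s)).
Qed.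

Lemma cos_even_mult_PI n : cos (2 * INR n * PI) = 1.
Proof. rewrite <- (Rplus_0_l (2 * INR n * PI)), cos_period; apply cos_0. Qed.

Lemma sin_even_mult_PI n : sin (2 * INR n * PI) = 0.
Proof. rewrite <- (Rplus_0_l (2 * INR n * PI)), sin_period; apply sin_0. Qed.

Lemma cos_odd_mult_PI n : cos ((2 * INR n + 1) * PI) = -1.
Proof.
replace ((2 * INR n + 1) * PI) with (PI + 2 * INR n * PI) by ring.
rewrite cos_period; apply cos_PI.
Qed.

Lemma sin_odd_mult_PI n : sin ((2 * INR n + 1) * PI) = 0.
Proof.
replace ((2 * INR n + 1) * PI) with (PI + 2 * INR n * PI) by ring.
rewrite sin_period; apply sin_PI.
Qed.

Lemma div_1_plus_sqr_lt_inv m : 0 < m -> m / (1 + m * m) < / m.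
Proof.
intros hm.
apply (Rmult_lt_reg_r (m * (1 + m * m))); [nra |].
field_simplify; nra.
Qed.

Section SwapTrajectory.

(* r1 and r2 stand for 1 / (m + 1) and 1 / (m - 1); keeping them as variables
   constrained by polynomial equations lets nsatz check the ODE. *)
Variables m w r1 r2 : R.

Definition swap_control : R := m * (w * w / 4).

Definition swap_state (th : R) : state :=
  let g := swap_control in
  let p := r1 * r2 * (w * w / 4) in
  let s := p * w * (1 + m * m) / 2 in
  let cW := - m * m * (w * w / 4) * r1 * r1 / 2 in
  let cV := - m * m * (w * w / 4) * r2 * r2 / 2 in
  let aW := - m * r1 * r1 / 4 in
  let aV := - m * r2 * r2 / 4 in
  let W := (m + 1) * w in
  let V := (m - 1) * w in
  mkState
    (p * (- (m * m * m * m) * cos th + cos (m * th)))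
    (s * (m * m * m * sin th - sin (m * th)))
    (p * m * m * (cos th - cos (m * th)))
    (s * m * (sin (m * th) - m * sin th))
    (1 + cW * (cos ((m + 1) * th) - 1) + cV * (cos ((m - 1) * th) - 1))
    (aW * W * sin ((m + 1) * th) + aV * V * sin ((m - 1) * th))
    (aW * (2 + 2 * g) * (1 - cos ((m + 1) * th))
       + aV * (2 - 2 * g) * (1 - cos ((m - 1) * th)))
    (aW * (2 + 2 * g) * (cos ((m + 1) * th) - 1)
       + aV * (2 - 2 * g) * (1 - cos ((m - 1) * th)))
    (aW * W * sin ((m + 1) * th) - aV * V * sin ((m - 1) * th))
    (cW * (cos ((m + 1) * th) - 1) - cV * (cos ((m - 1) * th) - 1)).

Definition swap_traj (t : R) : state := swap_state (w * t).

Hypothesis hw : w * w * (1 + m * m) = 4.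
Hypothesis hr1 : r1 * (m + 1) = 1.
Hypothesis hr2 : r2 * (m - 1) = 1.

Lemma swap_traj_solves T : is_solution (fun _ => swap_control) swap_traj T.
Proof.
unfold is_solution, swap_traj, swap_state, swap_control.
repeat split; apply coord_ok_of_derive; intro t;
  unfold fJ1, fJ3, fK2, fQ2, fJ0, fQ1, fK1, fQ3, fK3, fJ2; simpl.
all: auto_derive; try easy.
(* nsatz treats [/ 2] and [/ 4] as atoms. *)
all: assert (half : 2 * / 2 = 1) by field;
     assert (quarter : 4 * / 4 = 1) by field;
     unfold Rdiv; nsatz.
Qed.

Lemma swap_control_eq : swap_control = m / (1 + m * m).
Proof.
assert (h : 1 + m * m <> 0) by nra.
assert (hww : w * w = 4 / (1 + m * m)) by (rewrite <- hw; field; exact h).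
unfold swap_control; rewrite hww; field; exact h.
Qed.

Lemma swap_control_bound G0 :
  0 < m -> / m < G0 -> - G0 <= swap_control <= G0.
Proof.
intros hm hmG0; rewrite swap_control_eq.
pose proof (div_1_plus_sqr_lt_inv m hm).
assert (0 < m / (1 + m * m)) by (apply Rdiv_lt_0_compat; nra).
lra.
Qed.

Lemma swap_traj_start : swap_traj 0 = initial_state.
Proof.
unfold swap_traj, swap_state, initial_state.
rewrite !Rmult_0_r, cos_0, sin_0.
assert (half : 2 * / 2 = 1) by field.
assert (quarter : 4 * / 4 = 1) by field.
unfold Rdiv; f_equal; nsatz.
Qed.

Lemma swap_traj_half_period k :
  m = 2 * INR k + 1 -> swap_traj (PI / w) = target_state.
Proof.
intros hm.
assert (hw0 : w <> 0) by (intros ->; rewrite !Rmult_0_l in hw; lra).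
assert (phase : w * (PI / w) = PI) by (field; exact hw0).
unfold swap_traj, swap_state, target_state; rewrite phase.
replace (m * PI) with ((2 * INR k + 1) * PI) by (rewrite hm; ring).
replace ((m + 1) * PI) with (2 * INR (S k) * PI) by (rewrite hm, S_INR; ring).
replace ((m - 1) * PI) with (2 * INR k * PI) by (rewrite hm; ring).
rewrite cos_odd_mult_PI, sin_odd_mult_PI, !cos_even_mult_PI, !sin_even_mult_PI,
  cos_PI, sin_PI.
assert (half : 2 * / 2 = 1) by field.
assert (quarter : 4 * / 4 = 1) by field.
unfold Rdiv; f_equal; nsatz.
Qed.

End SwapTrajectory.

Theorem theorem1 (G0 : R) (hG0 : 0 < G0) :
  exists (g : R -> R) (T : R) (x : R -> state),
    0 < T /\
    (forall t, 0 <= t <= T -> - G0 <= g t <= G0) /\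
    is_solution g x T /\
    x 0 = initial_state /\
    x T = target_state.
Proof.
destruct (INR_unbounded (/ G0)) as [k hk].
set (m := 2 * INR k + 1).
assert (hinvG0 : 0 < / G0) by (apply Rinv_0_lt_compat; exact hG0).
assert (hm : 1 < m) by (unfold m; lra).
assert (hmG0 : / m < G0).
{ rewrite <- (Rinv_inv G0); apply Rinv_lt_contravar; [nra | unfold m; lra]. }
set (w := 2 / sqrt (1 + m * m)).
assert (hsqrt : 0 < sqrt (1 + m * m)) by (apply sqrt_lt_R0; nra).
assert (hw : w * w * (1 + m * m) = 4).
{ unfold w. rewrite <- (sqrt_sqrt (1 + m * m)) at 3 by nra. field; lra. }
assert (hw0 : 0 < w) by (unfold w; apply Rdiv_lt_0_compat; lra).
set (r1 := / (m + 1)); set (r2 := / (m - 1)).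
assert (hr1 : r1 * (m + 1) = 1) by (unfold r1; field; lra).
assert (hr2 : r2 * (m - 1) = 1) by (unfold r2; field; lra).
exists (fun _ => swap_control m w), (PI / w), (swap_traj m w r1 r2).
split; [apply Rdiv_lt_0_compat; [exact PI_RGT_0 | exact hw0] |].
split; [intros t _; apply (swap_control_bound m w hw); lra |].
split; [exact (swap_traj_solves m w r1 r2 hw hr1 hr2 (PI / w)) |].
split; [exact (swap_traj_start m w r1 r2 hw hr1 hr2) |].
exact (swap_traj_half_period m w r1 r2 hw hr1 hr2 k eq_refl).
Qed.
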